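(* Let $p$ be a prime with $p\equiv 1 \pmod 4$, let $G=\mathbb{Z}_{2p}$ and $H=\{0,p\}\le G$. Define $A_0=\{s,\ s+p\in\mathbb{Z}_{2p}: s\in\{1,\dots,p-1\} \text{ is a quadratic residue modulo } p\}$ and $A_1=\{t,\ t+p\in\mathbb{Z}_{2p}: t\in\{1,\dots,p-1\} \text{ is a quadratic non-residue modulo } p\}$ (so $|A_0|=|A_1|=p-1$ and $\mathbb{Z}_{2p}\setminus(A_0\cup A_1)=H$). Then (i) $\Delta(A_0)=\frac{p-5}{2}A_0\cup\frac{p-1}{2}A_1\cup(p-1)\{p\}$; (ii) $\Delta(A_1)=\frac{p-5}{2}A_1\cup\frac{p-1}{2}A_0\cup(p-1)\{p\}$; (iii) $\{A_0,A_1\}$ is a $(2p,2,p-1,p-3,2p-2)$-DPDF and a $(2p,2,p-1,p-1,0)$-EPDF in $\mathbb{Z}_{2p}$.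
   Context: For $D\subseteq \mathbb{Z}_v$, $\Delta(D)$ is the multiset $\{x-y:x,y\in D,x\ne y\}$, and $\Delta(D_1,D_2)$ is the multiset $\{x-y:x\in D_1,y\in D_2\}$. For a nonnegative integer $\lambda$ and a set $X$, $\lambda X$ denotes the multiset consisting of $\lambda$ copies of each element of $X$, and $\cup$ between multisets denotes multiset union. For a family $A=\{A_1,\dots,A_s\}$ of pairwise disjoint subsets, ${\rm Int}(A)=\bigcup_i\Delta(A_i)$ and ${\rm Ext}(A)=\bigcup_{i\ne j}\Delta(A_i,A_j)$. In a group $G$ of order $v$ with identity $0$, a $(v,s,k,\lambda,\mu)$-DPDF is a family of $s$ pairwise disjoint $k$-subsets of $G\setminus\{0\}$ with union $S$ such that ${\rm Int}(A)$ contains each element of $S$ exactly $\lambda$ times and each element of $G\setminus(S\cup\{0\})$ exactly $\mu$ times; a $(v,s,k,\lambda,\mu)$-EPDF is defined the same way using ${\rm Ext}(A)$. *)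

From HB Require Import structures.
From mathcomp Require Import all_boot all_order all_algebra.
Set Implicit Arguments. Unset Strict Implicit. Unset Printing Implicit Defensive.
Import GRing.Theory.
Local Open Scope ring_scope.

(* Multisets over a finite group are represented by sequences, compared
   with perm_eq (equality of multisets). *)
Section DF.
Variable G : finZmodType.

Definition Delta (D : {set G}) : seq G :=
  [seq x.1 - x.2 | x <- enum (setX D D) & x.1 != x.2].

Definition Delta2 (D1 D2 : {set G}) : seq G :=
  [seq x.1 - x.2 | x <- enum (setX D1 D2)].

Definition mscale (l : nat) (X : {set G}) : seq G :=
  flatten [seq nseq l x | x <- enum X].

Definition IntF (A : seq {set G}) : seq G := flatten [seq Delta Ai | Ai <- A].

Definition ExtF (A : seq {set G}) : seq G :=
  flatten [seq Delta2 (nth set0 A ij.1) (nth set0 A ij.2)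
          | ij <- [seq (i, j) | i <- iota 0 (size A), j <- iota 0 (size A)]
          & ij.1 != ij.2]%N.

Definition unionF (A : seq {set G}) : {set G} := \bigcup_(Ai <- A) Ai.

Definition pdf_family (v s k : nat) (A : seq {set G}) : Prop :=
  [/\ #|G| = v, size A = s,
      (forall i j, (i < s)%N -> (j < s)%N -> i <> j ->
         [disjoint nth set0 A i & nth set0 A j]),
      (forall i, (i < s)%N -> #|nth set0 A i| = k) &
      (forall i, (i < s)%N -> 0 \notin nth set0 A i)].

Definition df_counts (A : seq {set G}) (lam mu : nat) (M : seq G) : Prop :=
  forall x : G,
    (x \in unionF A -> count_mem x M = lam) /\
    (x \notin unionF A -> x != 0 -> count_mem x M = mu).

Definition is_DPDF (v s k lam mu : nat) (A : seq {set G}) : Prop :=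
  pdf_family v s k A /\ df_counts A lam mu (IntF A).

Definition is_EPDF (v s k lam mu : nat) (A : seq {set G}) : Prop :=
  pdf_family v s k A /\ df_counts A lam mu (ExtF A).
End DF.

Definition qres (p s : nat) : bool := [exists y : 'I_p, (y * y) %% p == s %% p]%N.

Definition A0 (p : nat) : {set 'Z_(2 * p)} :=
  [set x : 'Z_(2 * p) | [exists s : 'I_p,
     [&& (0 < s)%N, qres p s & (x == s%:R) || (x == (s + p)%:R)]]].

Definition A1 (p : nat) : {set 'Z_(2 * p)} :=
  [set x : 'Z_(2 * p) | [exists t : 'I_p,
     [&& (0 < t)%N, ~~ qres p t & (x == t%:R) || (x == (t + p)%:R)]]].

From mathcomp Require Import all_boot all_order all_algebra.
From mathcomp Require Import cyclic finfield zify.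
Import GRing.Theory.

Set Implicit Arguments.
Unset Strict Implicit.
Unset Printing Implicit Defensive.

Local Open Scope ring_scope.

(* Reduction modulo p maps Z_(2p) onto F_p with fibres {x, x + p}, and A0, A1 are
   the preimages of the nonzero squares Q and the non-squares N of F_p.  Hence each
   difference count in Z_(2p) is twice the corresponding count in F_p at the reduced
   difference, and the elements reducing to 0 are exactly 0 and p.
   By Euler's criterion, Q and N are the fibres of the multiplicative character
   x |-> x ^+ (p - 1)/2 over 1 and -1, so multiplying by an element of Q preserves Q
   and N while multiplying by one of N swaps them.  As -1 lies in Q for p = 1 mod 4,
   the number of ways to write d as a difference in S - T, for S, T in {Q, N},
   depends only on the class of d, and three counting identities give the
   cyclotomic numbers (p - 5)/4 and (p - 1)/4. *)

Lemma sum_in_eq (T : finType) (S : {set T}) x : (\sum_(u in S) (u == x))%N = (x \in S).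
Proof.
by rewrite big_mkcond (bigD1 x) //= eqxx big1 ?addn0 => [|u /negbTE ->]; case: (_ \in S).
Qed.

Section DifferenceCount.
Variable G : finZmodType.
Implicit Types (S T : {set G}) (d x : G).

Definition ndiff S T d : nat := #|[set u in S | u - d \in T]|.

Lemma ndiffE S T d : ndiff S T d = (\sum_(u in S) ((u - d)%R \in T))%N.
Proof. by rewrite /ndiff -sum1dep_card big_mkcondr. Qed.

Lemma ndiff0 S T : ndiff S T 0 = #|S :&: T|.
Proof. by apply: eq_card => u; rewrite !inE subr0. Qed.

Lemma ndiffN S T d : ndiff S T d = ndiff T S (- d).
Proof.
rewrite /ndiff -(card_preimset _ (addIr d)); apply: eq_card => v.
by rewrite !inE addrK opprK andbC.
Qed.

Lemma sum_ndiff S T : (\sum_d ndiff S T d)%N = (#|S| * #|T|)%N.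
Proof.
under eq_bigr do rewrite ndiffE.
rewrite exchange_big /= -sum_nat_const; apply: eq_bigr => u _.
rewrite (reindex_inj (subrI u)) /= -sum1_card [RHS]big_mkcond /=.
by apply: eq_bigr => d _; rewrite subKr.
Qed.

Lemma count_diff_pairs S T (P : pred (G * G)) x :
  count_mem x [seq y.1 - y.2 | y <- enum (setX S T) & P y] =
  #|[set u in S | (u - x \in T) && P (u, u - x)]|.
Proof.
rewrite count_map count_filter -sum1_count big_enum_cond /= sum1dep_card.
have inj_pair : injective (fun u : G => (u, u - x)) by move=> u v [].
rewrite -(card_imset _ inj_pair); apply: eq_card => -[u v].
rewrite !inE; apply/andP/imsetP => [[/andP[uS vT] /andP[/eqP <- Puv]]|[w]].
  by exists u; rewrite ?inE opprB addrC subrK ?uS ?vT.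
by rewrite inE => /and3P[wS wT Pw] [-> ->] /=; rewrite wS wT opprB addrC subrK eqxx.
Qed.

Lemma count_Delta2 S T x : count_mem x (Delta2 S T) = ndiff S T x.
Proof.
rewrite /Delta2 -[enum _]filter_predT count_diff_pairs.
by apply: eq_card => u; rewrite !inE andbT.
Qed.

Lemma count_Delta S x :
  count_mem x (Delta S) = if x == 0 then 0%N else ndiff S S x.
Proof.
rewrite /Delta count_diff_pairs /=; have [->|x_neq0] := eqVneq x 0.
  by apply: eq_card0 => u; rewrite !inE subr0 eqxx !andbF.
apply: eq_card => u; rewrite !inE.
have -> : u != u - x by rewrite -subr_eq0 opprB addrC subrK.
by rewrite andbT.
Qed.

Lemma count_mscale (l : nat) S x : count_mem x (mscale l S) = ((x \in S) * l)%N.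
Proof.
rewrite /mscale count_flatten sumnE !big_map big_enum /=.
under eq_bigr do rewrite count_nseq /=.
by rewrite -big_distrl /= sum_in_eq.
Qed.

End DifferenceCount.

Lemma ndiff_scale (F : finFieldType) (S T S' T' : {set F}) (l d : F) : l != 0 ->
    (forall v, (l * v \in S) = (v \in S')) -> (forall v, (l * v \in T) = (v \in T')) ->
  ndiff S T (l * d) = ndiff S' T' d.
Proof.
move=> l_neq0 lS lT; rewrite /ndiff -(card_preimset _ (mulfI l_neq0)).
by apply: eq_card => v; rewrite !inE -mulrBr lS lT.
Qed.

Section QuadraticResidues.
Variable F : finFieldType.
Hypothesis cardF_mod4 : (#|F| %% 4 = 1)%N.
Implicit Types (x y l d : F) (S T : {set F}).

Local Notation h := ((#|F| - 1) %/ 2)%N.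

Definition is_square x := [exists y, y * y == x].
Definition qr := [set x | (x != 0) && is_square x].
Definition qnr := [set x | (x != 0) && ~~ is_square x].

Definition qchar x := x ^+ h.

Lemma cardF_gt1 : (1 < #|F|)%N.
Proof. exact: finNzRing_gt1. Qed.

Lemma cardF_gt4 : (4 < #|F|)%N.
Proof. by have := cardF_gt1; lia. Qed.

Lemma expf_card_pred x : x != 0 -> x ^+ #|F|.-1 = 1.
Proof.
move=> x_neq0; apply: (mulIf x_neq0); rewrite mul1r -exprSr prednK ?expf_card //.
exact: ltnW cardF_gt1.
Qed.

Lemma prim_root_exists : exists w : F, (#|F|.-1).-primitive_root w.
Proof.
have /hasP[w _ w_prim] : has (#|F|.-1).-primitive_root (enum [set~ (0 : F)]).
  apply: has_prim_root; rewrite ?enum_uniq // -?cardE ?cardsC1 //.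
    by rewrite -subn1 subn_gt0 cardF_gt1.
  by apply/allP => x; rewrite mem_enum !inE => /expf_card_pred/unity_rootP.
by exists w.
Qed.

Lemma qcharM x y : qchar (x * y) = qchar x * qchar y.
Proof. exact: exprMn. Qed.

Lemma qchar0 : qchar 0 = 0.
Proof. by rewrite /qchar expr0n; have := cardF_gt4; case: eqP => //; lia. Qed.

Lemma qchar_sqr x : x != 0 -> qchar x ^+ 2 = 1.
Proof.
move=> x_neq0; rewrite -exprM -(expf_card_pred x_neq0); congr (_ ^+ _).
have := cardF_gt4; lia.
Qed.

Lemma qchar_sign x : x != 0 -> (qchar x == 1) || (qchar x == -1).
Proof. by rewrite -sqrf_eq1 => /qchar_sqr ->. Qed.

Lemma qcharN1 : qchar (-1) = 1.
Proof. by rewrite /qchar -signr_odd; have -> : odd h = false by lia. Qed.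

Lemma euler_criterion x : x != 0 -> is_square x = (qchar x == 1).
Proof.
move=> x_neq0; have [w w_prim] := prim_root_exists.
have h2 : #|F|.-1 = (h * 2)%N by have := cardF_gt4; lia.
apply/existsP/eqP => [[y /eqP yy]|x_h].
  have y_neq0 : y != 0 by apply: contraNneq x_neq0 => y0; rewrite -yy y0 mul0r.
  by rewrite /qchar -yy -expr2 -exprM mulnC -h2 expf_card_pred.
have [[i _] /= x_wi] := prim_rootP w_prim (expf_card_pred x_neq0).
have : (#|F|.-1 %| i * h)%N by rewrite (prim_order_dvd w_prim) exprM -x_wi; apply/eqP.
rewrite h2 [(h * 2)%N]mulnC dvdn_pmul2r; last by have := cardF_gt4; lia.
move=> /dvdnP[k i_k2]; exists (w ^+ k).
by rewrite x_wi i_k2 -expr2 -exprM mulnC.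
Qed.

Lemma exists_nonsquare : exists2 n : F, n != 0 & qchar n != 1.
Proof.
have [w w_prim] := prim_root_exists; have := cardF_gt4 => F_gt4.
exists w; first by rewrite (prim_root_eq0 w_prim); lia.
by rewrite /qchar -(prim_order_dvd w_prim) gtnNdvd //; lia.
Qed.

Lemma oner_neqN1 : (1 : F) != -1.
Proof.
have [n n_neq0 n_h] := exists_nonsquare.
by move: (qchar_sign n_neq0); rewrite (negbTE n_h) /= => /eqP <-; rewrite eq_sym.
Qed.

Definition qclass (e : F) := [set x | qchar x == e].

Lemma qrE : qr = qclass 1.
Proof.
apply/setP => x; rewrite !inE; have [->|x_neq0] := eqVneq x 0.
  by rewrite qchar0 eq_sym oner_eq0.
exact: euler_criterion.
Qed.

Lemma qnrE : qnr = qclass (-1).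
Proof.
apply/setP => x; rewrite !inE; have [->|x_neq0] := eqVneq x 0.
  by rewrite qchar0 eq_sym oppr_eq0 oner_eq0.
rewrite euler_criterion //=; have := qchar_sign x_neq0.
by case: eqP => [->|] //=; rewrite (negbTE oner_neqN1).
Qed.

Lemma N1_qr : -1 \in qr.
Proof. by rewrite qrE inE qcharN1. Qed.

Lemma mem_qclassMl l v e :
  l != 0 -> (l * v \in qclass e) = (v \in qclass (qchar l * e)).
Proof.
move=> l_neq0; rewrite !inE qcharM.
by apply/eqP/eqP => [<-|->]; rewrite mulrA -expr2 qchar_sqr ?mul1r.
Qed.

Lemma card_qr_qnr : (#|qr| + #|qnr|)%N = (#|F| - 1)%N.
Proof.
rewrite subn1 -(cardsC1 0) -(cardsID [set x | is_square x] [set~ 0]).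
by congr (_ + _)%N; apply: eq_card => x; rewrite !inE // andbC.
Qed.

Lemma card_qnr : #|qnr| = #|qr|.
Proof.
have [n n_neq0 n_h] := exists_nonsquare.
rewrite -(card_preimset _ (mulfI n_neq0)); apply: eq_card => v.
rewrite inE qnrE qrE mem_qclassMl //.
by move: (qchar_sign n_neq0); rewrite (negbTE n_h) /= => /eqP ->; rewrite mulrNN mulr1.
Qed.

Lemma card_qr : #|qr| = h.
Proof. by have := card_qr_qnr; rewrite card_qnr; lia. Qed.

Lemma ndiff_qclass e e' d : d != 0 ->
  ndiff (qclass e) (qclass e') d = ndiff (qclass (qchar d * e)) (qclass (qchar d * e')) 1.
Proof.
move=> d_neq0; rewrite -{1}[d]mulr1.
by apply: ndiff_scale => // v; rewrite mem_qclassMl.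
Qed.

Lemma ndiff_qr_qnr_row S d :
  (ndiff S qr d + ndiff S qnr d + (d \in S))%N = #|S|.
Proof.
rewrite -sum_in_eq !ndiffE -!big_split -sum1_card; apply: eq_bigr => u _ /=.
by rewrite !inE -(subr_eq0 u d); case: (u - d == 0); case: is_square.
Qed.

Lemma qr_neq0 x : x \in qr -> x != 0.
Proof. by rewrite inE => /andP[]. Qed.

Lemma qnr_neq0 x : x \in qnr -> x != 0.
Proof. by rewrite inE => /andP[]. Qed.

Lemma ndiff_qclass_qr e e' d : d \in qr ->
  ndiff (qclass e) (qclass e') d = ndiff (qclass e) (qclass e') 1.
Proof.
move=> dQ; rewrite ndiff_qclass ?qr_neq0 //.
by move: dQ; rewrite qrE inE => /eqP ->; rewrite !mul1r.
Qed.

Lemma ndiff_qclass_qnr e e' d : d \in qnr ->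
  ndiff (qclass e) (qclass e') d = ndiff (qclass (- e)) (qclass (- e')) 1.
Proof.
move=> dN; rewrite ndiff_qclass ?qnr_neq0 //.
by move: dN; rewrite qnrE inE => /eqP ->; rewrite !mulN1r.
Qed.

Lemma qr_or_qnr x : x != 0 -> (x \in qr) || (x \in qnr).
Proof. by rewrite !inE => ->; case: is_square. Qed.

Lemma qr_qnr_disjoint : qr :&: qnr = set0.
Proof. by apply/setP => x; rewrite !inE; case: is_square; rewrite !andbF. Qed.

Lemma one_qr : 1 \in qr.
Proof. by rewrite qrE inE /qchar expr1n. Qed.

Lemma qnr_qrF x : x \in qnr -> (x \in qr) = false.
Proof. by rewrite !inE => /andP[_ /negbTE ->]; rewrite andbF. Qed.

Lemma qr_qnrF x : x \in qr -> (x \in qnr) = false.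
Proof. by rewrite !inE => /andP[_ ->]; rewrite andbF. Qed.

Lemma ndiff1_values :
  [/\ ndiff qr qr 1 = ((#|F| - 5) %/ 4)%N, ndiff qr qnr 1 = ((#|F| - 1) %/ 4)%N,
      ndiff qnr qr 1 = ((#|F| - 1) %/ 4)%N & ndiff qnr qnr 1 = ((#|F| - 1) %/ 4)%N].
Proof.
set a := ndiff qr qr 1; set b := ndiff qr qnr 1; set b' := ndiff qnr qr 1.
set e := ndiff qnr qnr 1.
have b'_b : b' = b by rewrite /b' /b ndiffN qrE qnrE ndiff_qclass_qr ?N1_qr.
(* Sorting u in qr (resp. qnr) by the class of u - 1 gives a + b + 1 = h (resp.
   b' + e = h); summing ndiff qr qnr over all d gives (#|F| - 1) * b = h * h. *)
have row_qr := ndiff_qr_qnr_row qr 1.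
have row_qnr := ndiff_qr_qnr_row qnr 1.
rewrite card_qnr card_qr one_qr (qr_qnrF one_qr) in row_qr row_qnr.
have sum_b : (\sum_d ndiff qr qnr d)%N = (#|F|.-1 * b)%N.
  rewrite (bigD1 0) //= ndiff0 qr_qnr_disjoint cards0 add0n.
  rewrite (eq_bigr (fun _ => b)) ?sum_nat_cond_const; last first.
    move=> d /qr_or_qnr /orP[dQ|dN]; rewrite /b qrE qnrE.
      by rewrite ndiff_qclass_qr.
    by rewrite ndiff_qclass_qnr // opprK -qrE -qnrE; apply: b'_b.
  by congr (_ * _)%N; rewrite -(cardsC1 0); apply: eq_card => x; rewrite !inE.
rewrite sum_ndiff card_qnr card_qr in sum_b.
have h_2b : h = (2 * b)%N.
  apply/eqP; rewrite -(eqn_pmul2l (_ : 0 < h)%N); last by have := cardF_gt4; lia.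
  by rewrite sum_b mulnA; apply/eqP; congr (_ * _)%N; have := cardF_gt4; lia.
by have := cardF_gt4; split; lia.
Qed.

Lemma ndiff_qr_qr d : ndiff qr qr d =
  if d == 0 then h else if d \in qr then ((#|F| - 5) %/ 4)%N else ((#|F| - 1) %/ 4)%N.
Proof.
have [->|/qr_or_qnr/orP[dQ|dN]] := eqVneq d 0; first by rewrite ndiff0 setIid card_qr.
  by rewrite dQ qrE ndiff_qclass_qr // -qrE; case: ndiff1_values.
by rewrite qnr_qrF // qrE ndiff_qclass_qnr // -qnrE; case: ndiff1_values.
Qed.

Lemma ndiff_qnr_qnr d : ndiff qnr qnr d =
  if d == 0 then h else if d \in qr then ((#|F| - 1) %/ 4)%N else ((#|F| - 5) %/ 4)%N.
Proof.
have [->|/qr_or_qnr/orP[dQ|dN]] := eqVneq d 0; first by rewrite ndiff0 setIid card_qnr card_qr.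
  by rewrite dQ qnrE ndiff_qclass_qr // -qnrE; case: ndiff1_values.
rewrite qnr_qrF // qnrE ndiff_qclass_qnr // opprK -qrE.
by case: ndiff1_values.
Qed.

Lemma ndiff_qr_qnr d : ndiff qr qnr d = if d == 0 then 0%N else ((#|F| - 1) %/ 4)%N.
Proof.
have [->|/qr_or_qnr/orP[dQ|dN]] := eqVneq d 0; first by rewrite ndiff0 qr_qnr_disjoint cards0.
  by rewrite qrE qnrE ndiff_qclass_qr // -qrE -qnrE; case: ndiff1_values.
rewrite qrE qnrE ndiff_qclass_qnr // opprK -qrE -qnrE.
by case: ndiff1_values.
Qed.

Lemma ndiff_qnr_qr d : ndiff qnr qr d = if d == 0 then 0%N else ((#|F| - 1) %/ 4)%N.
Proof.
have [->|/qr_or_qnr/orP[dQ|dN]] := eqVneq d 0.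
  by rewrite ndiff0 setIC qr_qnr_disjoint cards0.
  by rewrite qrE qnrE ndiff_qclass_qr // -qrE -qnrE; case: ndiff1_values.
rewrite qrE qnrE ndiff_qclass_qnr // opprK -qrE -qnrE.
by case: ndiff1_values.
Qed.

End QuadraticResidues.

Section Preimage.
Variables (G H : finZmodType) (f : G -> H) (k : nat).
Hypothesis f_sub : {morph f : a b / a - b}.
Hypothesis card_fiber : forall u, #|f @^-1: [set u]| = k.

Lemma card_preimset_fiber (U : {set H}) : #|f @^-1: U| = (k * #|U|)%N.
Proof.
rewrite -sum1_card (partition_big f (mem U)) => [|a]; last by rewrite inE.
rewrite mulnC -sum_nat_const; apply: eq_bigr => u uU.
rewrite -(card_fiber u) sum1dep_card; apply: eq_card => a.
by rewrite !inE andbC; case: eqP => // ->.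
Qed.

Lemma ndiff_preimset (S T : {set H}) x :
  ndiff (f @^-1: S) (f @^-1: T) x = (k * ndiff S T (f x))%N.
Proof.
rewrite -card_preimset_fiber; apply: eq_card => a.
by rewrite !inE f_sub.
Qed.
End Preimage.

Section Reduction.
Variable p : nat.
Hypothesis p_prime : prime p.

Let p_gt1 : (1 < p)%N := prime_gt1 p_prime.

Definition redp (x : 'Z_(2 * p)) : 'F_p := (x : nat)%:R.

Lemma val_Z2p_nat n : ((n%:R : 'Z_(2 * p)) : nat) = (n %% (2 * p))%N.
Proof. by apply: val_Zp_nat; lia. Qed.

Lemma val_Z2p_lt (x : 'Z_(2 * p)) : (x < 2 * p)%N.
Proof. by case: x => x /=; rewrite Zp_cast //; lia. Qed.

Lemma val_Fp_lt (u : 'F_p) : (u < p)%N.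
Proof. by case: u => u /=; rewrite Fp_cast. Qed.

Lemma redp_add a b : redp (a + b) = redp a + redp b.
Proof.
rewrite /redp -natrD -[in LHS](natr_Zp a) -[in LHS](natr_Zp b) -natrD.
by rewrite val_Z2p_nat -Fp_nat_mod // modn_dvdm ?dvdn_mull // Fp_nat_mod.
Qed.

Lemma redp_sub : {morph redp : a b / a - b}.
Proof. by move=> a b; apply: (addIr (redp b)); rewrite -redp_add !subrK. Qed.

Lemma redp_eq x u :
  (redp x == u) = (x == (u : nat)%:R) || (x == (u + p)%N%:R).
Proof.
have xlt := val_Z2p_lt x; have ult := val_Fp_lt u.
rewrite -!val_eqE /= val_Fp_nat // !val_Z2p_nat.
rewrite (modn_small (_ : u < 2 * p)%N) ?(modn_small (_ : u + p < 2 * p)%N); try lia.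
case: (ltnP x p) => x_p; first by rewrite modn_small //; lia.
by rewrite -{1}(subnK x_p) modnDr modn_small; lia.
Qed.

Lemma card_redp_fiber u : #|redp @^-1: [set u]| = 2%N.
Proof.
have ult := val_Fp_lt u.
have -> : redp @^-1: [set u] = [set (u : nat)%:R; (u + p)%N%:R].
  by apply/setP => x; rewrite !inE redp_eq.
by rewrite cards2 -val_eqE /= !val_Z2p_nat !modn_small; lia.
Qed.

Lemma pZ2p_neq0 : (p%:R : 'Z_(2 * p)) != 0.
Proof. by rewrite -val_eqE /= val_Z2p_nat // modn_small; lia. Qed.

Lemma redp_eq0 x : (redp x == 0) = (x == 0) || (x == p%:R).
Proof. by rewrite redp_eq. Qed.

Lemma eqFp_nat m n : (m%:R == n%:R :> 'F_p) = (m %% p == n %% p)%N.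
Proof. by rewrite -val_eqE /= !val_Fp_nat. Qed.

Lemma qres_is_square s : qres p s = is_square (s%:R : 'F_p).
Proof.
apply/existsP/existsP => [[y y2]|[y /eqP y2]]; first by exists y%:R; rewrite -natrM eqFp_nat.
by exists (Ordinal (val_Fp_lt y)); rewrite -eqFp_nat natrM natr_Zp y2.
Qed.

Lemma mem_redp_class (P : pred 'F_p) x :
  [exists s : 'I_p, [&& 0 < s, P s%:R & (x == s%:R) || (x == (s + p)%N%:R)]]%N =
  (redp x != 0) && P (redp x).
Proof.
apply/existsP/andP => [[s /and3P[s_gt0 Ps x_s]]|[rx_neq0 P_rx]].
  have s_lt := ltn_ord s.
  have -> : redp x = s%:R by apply/eqP; rewrite redp_eq val_Fp_nat // modn_small.
  by split; rewrite // -val_eqE /= val_Fp_nat // modn_small //; lia.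
exists (Ordinal (val_Fp_lt (redp x))) => /=; rewrite natr_Zp P_rx -redp_eq eqxx andbT.
by rewrite andbT lt0n -val_eqE in rx_neq0 *.
Qed.

Lemma A0_preim : A0 p = redp @^-1: qr 'F_p.
Proof.
apply/setP => x; rewrite !inE -(mem_redp_class (@is_square _)).
by apply: eq_existsb => s; rewrite qres_is_square.
Qed.

Lemma A1_preim : A1 p = redp @^-1: qnr 'F_p.
Proof.
apply/setP => x; rewrite !inE -(mem_redp_class (fun u => ~~ is_square u)).
by apply: eq_existsb => s; rewrite qres_is_square.
Qed.

End Reduction.

Section DifferenceFamily.
Variable p : nat.
Hypothesis p_prime : prime p.
Hypothesis p_mod4 : (p %% 4 = 1)%N.

Let cardFp_mod4 : (#|'F_p| %% 4 = 1)%N. Proof. by rewrite card_Fp. Qed.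
Let A0E := A0_preim p_prime.
Let A1E := A1_preim p_prime.

Lemma count_Delta_redp (S : {set 'F_p}) x :
  count_mem x (Delta (@redp p @^-1: S)) =
  if x == 0 then 0%N else (2 * ndiff S S (redp x))%N.
Proof. by rewrite count_Delta (ndiff_preimset (redp_sub p_prime) (card_redp_fiber p_prime)). Qed.

Lemma count_Delta2_redp (S T : {set 'F_p}) x :
  count_mem x (Delta2 (@redp p @^-1: S) (@redp p @^-1: T)) = (2 * ndiff S T (redp x))%N.
Proof. by rewrite count_Delta2 (ndiff_preimset (redp_sub p_prime) (card_redp_fiber p_prime)). Qed.

Lemma perm_Delta_A0 :
  perm_eq (Delta (A0 p))
    (mscale ((p - 5) %/ 2) (A0 p) ++ mscale ((p - 1) %/ 2) (A1 p) ++
     nseq (p - 1) (p%:R : 'Z_(2 * p))).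
Proof.
apply/allP => x _; apply/eqP; rewrite !count_cat !count_mscale count_nseq A0E A1E /=.
rewrite count_Delta_redp ndiff_qr_qr // card_Fp // !inE redp_eq0 //.
have [->|x_neq0] := eqVneq x 0; first by rewrite (negbTE (pZ2p_neq0 p_prime)).
by rewrite [p%:R == _]eq_sym; case: (x =P p%:R) => _; case: is_square => /=; lia.
Qed.

Lemma perm_Delta_A1 :
  perm_eq (Delta (A1 p))
    (mscale ((p - 5) %/ 2) (A1 p) ++ mscale ((p - 1) %/ 2) (A0 p) ++
     nseq (p - 1) (p%:R : 'Z_(2 * p))).
Proof.
apply/allP => x _; apply/eqP; rewrite !count_cat !count_mscale count_nseq A0E A1E /=.
rewrite count_Delta_redp ndiff_qnr_qnr // card_Fp // !inE redp_eq0 //.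
have [->|x_neq0] := eqVneq x 0; first by rewrite (negbTE (pZ2p_neq0 p_prime)).
by rewrite [p%:R == _]eq_sym; case: (x =P p%:R) => _; case: is_square => /=; lia.
Qed.

Lemma pdf_family_A0A1 : pdf_family (2 * p) 2 (p - 1) [:: A0 p; A1 p].
Proof.
have card_A : forall S : {set 'F_p}, #|@redp p @^-1: S| = (2 * #|S|)%N.
  by move=> S; rewrite (card_preimset_fiber (card_redp_fiber p_prime)).
split => //.
- by rewrite card_ord Zp_cast //; lia.
- move=> [|[|i]] [|[|j]] //= _ _ _; rewrite A0E A1E -?setI_eq0 -preimsetI.
    by rewrite qr_qnr_disjoint preimset0.
  by rewrite setIC qr_qnr_disjoint preimset0.
- move=> [|[|i]] //= _; rewrite ?A0E ?A1E card_A.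
    by rewrite (card_qr cardFp_mod4) card_Fp //; lia.
  by rewrite (card_qnr cardFp_mod4) (card_qr cardFp_mod4) card_Fp //; lia.
- move=> [|[|i]] //= _; rewrite ?A0E ?A1E !inE redp_eq0 // eqxx //.
Qed.

Lemma DPDF_A0A1 : is_DPDF (2 * p) 2 (p - 1) (p - 3) (2 * p - 2) [:: A0 p; A1 p].
Proof.
split; first exact: pdf_family_A0A1.
move=> x; rewrite /unionF !big_cons big_nil /IntF /= !count_cat /=.
rewrite A0E A1E !count_Delta_redp ndiff_qr_qr // ndiff_qnr_qnr //.
rewrite card_Fp // !inE redp_eq0 //.
have [->|x_neq0] := eqVneq x 0; first by split => /=.
by case: (x =P p%:R) => _; case: is_square => /=; split => //; lia.
Qed.

Lemma EPDF_A0A1 : is_EPDF (2 * p) 2 (p - 1) (p - 1) 0 [:: A0 p; A1 p].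
Proof.
split; first exact: pdf_family_A0A1.
move=> x; rewrite /unionF !big_cons big_nil /ExtF /= !count_cat /=.
rewrite A0E A1E !count_Delta2_redp ndiff_qr_qnr // ndiff_qnr_qr //.
rewrite card_Fp // !inE redp_eq0 //.
have [->|x_neq0] := eqVneq x 0; first by split => /=.
by case: (x =P p%:R) => _; case: is_square => /=; split => //; lia.
Qed.
End DifferenceFamily.

Local Close Scope ring_scope.

Theorem mainTheorem5 (p : nat) (hp : prime p) (hp4 : p %% 4 = 1) :
  [/\ perm_eq (Delta (A0 p))
        (mscale ((p - 5) %/ 2) (A0 p) ++ mscale ((p - 1) %/ 2) (A1 p)
         ++ nseq (p - 1) (p%:R : 'Z_(2 * p))%R),
      perm_eq (Delta (A1 p))
        (mscale ((p - 5) %/ 2) (A1 p) ++ mscale ((p - 1) %/ 2) (A0 p)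
         ++ nseq (p - 1) (p%:R : 'Z_(2 * p))%R),
      is_DPDF (2 * p) 2 (p - 1) (p - 3) (2 * p - 2) [:: A0 p; A1 p] &
      is_EPDF (2 * p) 2 (p - 1) (p - 1) 0 [:: A0 p; A1 p]].
Proof.
split; [exact: perm_Delta_A0 | exact: perm_Delta_A1 | exact: DPDF_A0A1 | exact: EPDF_A0A1].
Qed.
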